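(* Let $\mathbb{F}$ be a field, $\prec$ a term order on the monomials of $\mathbb{F}[x_1,\ldots,x_n]$, $\mathcal{F}\subseteq\mathbb{F}^n$ a finite set, $h\in\mathbb{F}^n\setminus\mathcal{F}$, and $\mathcal{T}:=\mathcal{F}\cup\{h\}$. Let $\{g_1,\ldots,g_s\}$ be the reduced Gröbner basis of $I(\mathcal{F})$ with respect to $\prec$, indexed so that $m_1\prec m_2\prec\cdots\prec m_s$ where $m_j:=\mathrm{lm}_\prec(g_j)$. Let $i:=\min\{j: g_j(h)\ne 0\}$. Then $\mathrm{Sm}(\prec,\mathcal{T})=\mathrm{Sm}(\prec,\mathcal{F})\cup\{m_i\}$.
   Context: $I(\mathcal{F})$ is the ideal of polynomials vanishing on $\mathcal{F}$; $\mathrm{lm}_\prec(f)$ is the $\prec$-largest monomial of $f$ with nonzero coefficient; $\mathrm{Sm}(\prec,\mathcal{F})$ is the set of monomials that are not leading monomials of nonzero elements of $I(\mathcal{F})$. A Gröbner basis $\{g_1,\dots,g_s\}$ of an ideal $I$ is a finite subset of $I$ whose leading monomials generate the monomial ideal of all leading monomials of $I$; it is reduced if each $\mathrm{lm}(g_j)$ has coefficient 1 and no monomial of $g_j$ is divisible by $\mathrm{lm}(g_l)$ for $l\ne j$. *)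

From HB Require Import structures.
From mathcomp Require Import all_boot all_order all_algebra.
Set Implicit Arguments. Unset Strict Implicit. Unset Printing Implicit Defensive.
Import GRing.Theory.
Local Open Scope ring_scope.

Definition mon (n : nat) := {ffun 'I_n -> nat}.
Definition mon1 (n : nat) : mon n := [ffun _ => 0%N].
Definition monmul (n : nat) (a b : mon n) : mon n := [ffun i => (a i + b i)%N].
Definition mondiv (n : nat) (a b : mon n) : Prop := forall i, (a i <= b i)%N.

Definition point (F : fieldType) (n : nat) := {ffun 'I_n -> F}.

Record mpoly (F : fieldType) (n : nat) := MPoly {
  mcoef : mon n -> F;
  msupp : seq (mon n);
  msupp_ok : forall m, mcoef m != 0 -> m \in msupp }.

Definition monval (F : fieldType) (n : nat) (m : mon n) (x : point F n) : F :=
  \prod_(i < n) x i ^+ m i.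

Definition peval (F : fieldType) (n : nat) (p : mpoly F n) (x : point F n) : F :=
  \sum_(m <- undup (msupp p)) mcoef p m * monval m x.

Definition term_order (n : nat) (lt : mon n -> mon n -> bool) : Prop :=
  [/\ (forall a, ~~ lt a a),
      (forall a b c, lt a b -> lt b c -> lt a c),
      (forall a b, a != b -> lt a b || lt b a),
      (forall a b c, lt a b -> lt (monmul a c) (monmul b c))
    & well_founded (fun a b => lt a b)].

Definition is_lm (F : fieldType) (n : nat) (lt : mon n -> mon n -> bool)
    (p : mpoly F n) (m : mon n) : Prop :=
  mcoef p m != 0 /\ (forall m', mcoef p m' != 0 -> m' != m -> lt m' m).

Definition vanishes (F : fieldType) (n : nat) (S : seq (point F n)) (p : mpoly F n) : Prop :=
  forall x, x \in S -> peval p x = 0.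

Definition Sm (F : fieldType) (n : nat) (lt : mon n -> mon n -> bool)
    (S : seq (point F n)) (m : mon n) : Prop :=
  ~ exists p : mpoly F n, vanishes S p /\ (exists m0, mcoef p m0 != 0) /\ is_lm lt p m.

Definition reduced_groebner (F : fieldType) (n : nat) (lt : mon n -> mon n -> bool)
    (S : seq (point F n)) (s : nat) (g : 'I_s -> mpoly F n) (lms : 'I_s -> mon n) : Prop :=
  [/\ (forall j, vanishes S (g j)),
      (forall j, is_lm lt (g j) (lms j)),
      (forall f m, vanishes S f -> is_lm lt f m -> exists j, mondiv (lms j) m),
      (forall j, mcoef (g j) (lms j) = 1)
    & (forall j l m, l != j -> mcoef (g j) m != 0 -> ~ mondiv (lms l) m)].

(* I(T) is contained in I(F), so Sm(F) is contained in Sm(T).  The monomial m_i is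
   standard for T because every element of I(F) whose monomials all lie below m_i
   vanishes at h: cancelling its leading term with a multiple of some g_j forces
   m_j below m_i, hence j < i and g_j(h) = 0.  So if p in I(T) had leading monomial
   m_i with coefficient c, then p - c g_i would be such an element, giving
   c g_i(h) = 0, which is absurd.  Conversely, a leading monomial m <> m_i of I(F)
   is a multiple u m_j; if j < i then u g_j already lies in I(T), and otherwise
   m_i < m and u g_j - (u g_j)(h)/g_i(h) g_i lies in I(T) with leading monomial m. *)
From mathcomp Require Import all_boot all_order all_algebra.
Set Implicit Arguments. Unset Strict Implicit. Unset Printing Implicit Defensive.
Import GRing.Theory.
Local Open Scope ring_scope.

Section Monomials.

Variable n : nat.
Implicit Types a b m u : mon n.

Definition mondiff u m : mon n := [ffun k => (m k - u k)%N].

Lemma monmulC a b : monmul a b = monmul b a.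
Proof. by apply/ffunP => k; rewrite !ffunE addnC. Qed.

Lemma mon1mul a : monmul (mon1 n) a = a.
Proof. by apply/ffunP => k; rewrite !ffunE. Qed.

Lemma monmul_diff u m : mondiv u m -> monmul u (mondiff u m) = m.
Proof. by move=> um; apply/ffunP => k; rewrite !ffunE subnKC. Qed.

Lemma mondiff_mul u m : mondiff u (monmul u m) = m.
Proof. by apply/ffunP => k; rewrite !ffunE addKn. Qed.

Lemma monmul_inj u : injective (monmul u).
Proof. by move=> a b eq_ab; rewrite -(mondiff_mul u a) eq_ab mondiff_mul. Qed.

Lemma monval_mul (F : fieldType) a b (x : point F n) :
  monval (monmul a b) x = monval a x * monval b x.
Proof. by rewrite /monval -big_split; apply: eq_bigr => k _; rewrite ffunE exprD. Qed.

End Monomials.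

Section Polynomials.

Variables (F : fieldType) (n : nat).
Implicit Types (p q : mpoly F n) (a b : F) (m u : mon n) (x : point F n).

Lemma mcoef_notin_supp p m : m \notin msupp p -> mcoef p m = 0.
Proof. by move=> pm; apply/eqP; apply: contraNT pm; apply: msupp_ok. Qed.

Lemma pcomb_supp_ok a p b q m :
  a * mcoef p m + b * mcoef q m != 0 -> m \in msupp p ++ msupp q.
Proof.
rewrite mem_cat; apply: contraR; rewrite negb_or => /andP[pm qm].
by rewrite !mcoef_notin_supp // !mulr0 addr0.
Qed.

Definition pcomb a p b q : mpoly F n :=
  MPoly (@pcomb_supp_ok a p b q).

Definition pmulmon_coef u p m : F :=
  if [forall k, u k <= m k]%N then mcoef p (mondiff u m) else 0.

Lemma pmulmon_supp_ok u p m :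
  pmulmon_coef u p m != 0 -> m \in map (monmul u) (msupp p).
Proof.
rewrite /pmulmon_coef; case: forallP => [um /msupp_ok pm|]; last by rewrite eqxx.
by apply/mapP; exists (mondiff u m); rewrite ?monmul_diff.
Qed.

Definition pmulmon u p : mpoly F n := MPoly (@pmulmon_supp_ok u p).

Lemma mcoef_pmulmon u p m : mcoef (pmulmon u p) (monmul u m) = mcoef p m.
Proof.
rewrite /= /pmulmon_coef mondiff_mul; case: forallP => // [[]] k.
by rewrite ffunE leq_addr.
Qed.

Lemma mcoef_pmulmon_diff u m p :
  mondiv u m -> mcoef (pmulmon (mondiff u m) p) m = mcoef p u.
Proof. by move=> um; rewrite -{2}(monmul_diff um) monmulC mcoef_pmulmon. Qed.

Lemma peval_supp_seq p (L : seq (mon n)) x :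
  uniq L -> {subset msupp p <= L} ->
  peval p x = \sum_(m <- L) mcoef p m * monval m x.
Proof.
move=> uL pL; rewrite (bigID (mem (msupp p))) /= [X in _ + X]big1 ?addr0; last first.
  by move=> m /mcoef_notin_supp ->; rewrite mul0r.
rewrite -big_filter; apply/perm_big/uniq_perm; rewrite ?undup_uniq ?filter_uniq //.
by move=> m; rewrite mem_filter mem_undup; case: (boolP (m \in msupp p)) => // /pL ->.
Qed.

Lemma peval_pcomb a p b q x :
  peval (pcomb a p b q) x = a * peval p x + b * peval q x.
Proof.
have uL := undup_uniq (msupp p ++ msupp q).
rewrite !(peval_supp_seq _ uL).
- by rewrite !mulr_sumr -big_split; apply: eq_bigr => m _; rewrite mulrDl !mulrA.
all: move=> m /= pm; rewrite mem_undup mem_cat.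
all: by move: pm; rewrite ?mem_cat => ->; rewrite ?orbT.
Qed.

Lemma peval_pmulmon u p x : peval (pmulmon u p) x = monval u x * peval p x.
Proof.
have uL : uniq (map (monmul u) (undup (msupp p))).
  by rewrite map_inj_uniq ?undup_uniq //; apply: monmul_inj.
rewrite (peval_supp_seq _ uL); last first.
  by move=> m /mapP[m' pm' ->]; rewrite map_f ?mem_undup.
rewrite big_map /peval mulr_sumr; apply: eq_bigr => m _.
by rewrite mcoef_pmulmon monval_mul mulrCA.
Qed.

Lemma peval_eq0 p x : (forall m, mcoef p m = 0) -> peval p x = 0.
Proof. by move=> p0; rewrite /peval big1 // => m _; rewrite p0 mul0r. Qed.

Lemma vanishes_pcomb S a p b q :
  vanishes S p -> vanishes S q -> vanishes S (pcomb a p b q).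
Proof. by move=> pS qS x xS; rewrite peval_pcomb pS ?qS // !mulr0 addr0. Qed.

Lemma vanishes_pmulmon S u p : vanishes S p -> vanishes S (pmulmon u p).
Proof. by move=> pS x xS; rewrite peval_pmulmon pS ?mulr0. Qed.

Lemma vanishes_cons h S p : vanishes (h :: S) p <-> peval p h = 0 /\ vanishes S p.
Proof.
split=> [pT | [ph pS] x]; last by rewrite inE => /predU1P[->|/pS].
by split=> [|x xS]; apply: pT; rewrite inE ?eqxx ?xS ?orbT.
Qed.

End Polynomials.

Section TermOrder.

Variables (n : nat) (lt : mon n -> mon n -> bool).
Hypothesis ord : term_order lt.
Implicit Types a b c m u : mon n.

Lemma mon_ltxx a : ~~ lt a a.
Proof. by case: ord. Qed.

Lemma mon_lt_trans a b c : lt a b -> lt b c -> lt a c.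
Proof. by case: ord => _ tr _ _ _; apply: tr. Qed.

Lemma mon_lt_total a b : a != b -> lt a b || lt b a.
Proof. by case: ord => _ _ tot _ _; apply: tot. Qed.

Lemma mon_ltMr c a b : lt a b -> lt (monmul a c) (monmul b c).
Proof. by case: ord => _ _ _ mul _; apply: mul. Qed.

Lemma mon_lt_wf : well_founded (fun a b => lt a b).
Proof. by case: ord. Qed.

(* A monomial a below 1 would give the infinite descent 1 > a > a^2 > ... *)
Lemma mon1_minimal a : ~~ lt a (mon1 n).
Proof.
elim/(well_founded_ind mon_lt_wf): a => a IH; apply/negP => a1.
have a2a : lt (monmul a a) a by have := mon_ltMr a a1; rewrite mon1mul.
by have := IH _ a2a; rewrite (mon_lt_trans a2a a1).
Qed.

Lemma mondiv_le a b : mondiv a b -> b = a \/ lt a b.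
Proof.
move=> ab; have eq_b : monmul (mondiff a b) a = b by rewrite monmulC monmul_diff.
have [d1|ne1] := eqVneq (mondiff a b) (mon1 n); first by left; rewrite -eq_b d1 mon1mul.
right; have : lt (mon1 n) (mondiff a b).
  by move: (mon_lt_total ne1); rewrite (negbTE (mon1_minimal _)).
by move/(mon_ltMr a); rewrite mon1mul eq_b.
Qed.

Lemma mon_seq_max (L : seq (mon n)) :
  L != [::] -> exists2 m, m \in L & forall m', m' \in L -> m' != m -> lt m' m.
Proof.
elim: L => // a L IH _; case: (eqVneq L [::]) => [-> | /IH[m mL mmax]].
  by exists a => [|m']; rewrite ?mem_head // inE => /eqP->; rewrite eqxx.
have [am | nam] := boolP (lt a m).
  exists m => [|m']; first by rewrite inE mL orbT.
  by rewrite inE => /predU1P[-> _ | /mmax].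
have ma : m = a \/ lt m a.
  by case: (eqVneq m a) => [|/mon_lt_total]; [left | rewrite (negbTE nam) orbF; right].
exists a => [|m']; first exact: mem_head.
rewrite inE => /predU1P[-> | m'L m'a]; first by rewrite eqxx.
case: ma => [eq_ma | ma]; first by rewrite -eq_ma in m'a *; apply: mmax.
by case: (eqVneq m' m) => [-> // | /(mmax _ m'L) m'm]; apply: mon_lt_trans m'm ma.
Qed.

End TermOrder.

Section LeadingMonomials.

Variables (F : fieldType) (n : nat) (lt : mon n -> mon n -> bool).
Hypothesis ord : term_order lt.
Implicit Types (p q : mpoly F n) (a b : F) (m u v M : mon n).

Definition supp_below p M := forall m, mcoef p m != 0 -> lt m M.

Lemma mpoly_eq0_or_lm p : (forall m, mcoef p m = 0) \/ exists m, is_lm lt p m.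
Proof.
set L := [seq m <- msupp p | mcoef p m != 0].
have inL m : (m \in L) = (mcoef p m != 0) by rewrite mem_filter andb_idr // => /msupp_ok.
have [L0 | /(mon_seq_max ord)[m mL mmax]] := eqVneq L [::]; [left | right].
  by move=> m; apply/eqP; move: (inL m); rewrite L0 in_nil => /esym/negbFE.
by exists m; split=> [|m']; rewrite -inL //; apply: mmax.
Qed.

Lemma is_lm_pmulmon p u v : is_lm lt p v -> is_lm lt (pmulmon u p) (monmul u v).
Proof.
move=> [pv vmax]; split=> [|m]; first by rewrite mcoef_pmulmon.
rewrite /= /pmulmon_coef; case: forallP => [um pm | _]; last by rewrite eqxx.
rewrite -(monmul_diff um) !(monmulC u) => ne; apply: (mon_ltMr ord).
by apply: vmax pm _; apply: contra ne => /eqP ->.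
Qed.

Lemma is_lm_pmulmon_diff p u m :
  is_lm lt p u -> mondiv u m -> is_lm lt (pmulmon (mondiff u m) p) m.
Proof. by move=> pu um; rewrite -{2}(monmul_diff um) monmulC; apply: is_lm_pmulmon. Qed.

Lemma is_lm_supp_below p v M : is_lm lt p v -> lt v M -> supp_below p M.
Proof.
move=> [_ vmax] vM m pm; case: (eqVneq m v) => [-> // | mv].
exact: (mon_lt_trans ord (vmax m pm mv) vM).
Qed.

Lemma pcomb_cancel_lm a p b q M : is_lm lt p M -> is_lm lt q M ->
  a * mcoef p M + b * mcoef q M = 0 -> supp_below (pcomb a p b q) M.
Proof.
move=> [_ pmax] [_ qmax] cancel m /=.
have [-> | mM] := eqVneq m M; first by rewrite cancel eqxx.
have [-> | /pmax/(_ mM) //] := eqVneq (mcoef p m) 0.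
by rewrite mulr0 add0r mulf_eq0 negb_or => /andP[_ /qmax]; apply.
Qed.

Lemma is_lm_pcomb a p b q M :
  a != 0 -> is_lm lt p M -> supp_below q M -> is_lm lt (pcomb a p b q) M.
Proof.
move=> a0 [pM pmax] qM.
have qM0 : mcoef q M = 0 by apply/eqP; apply: contraNT (mon_ltxx ord M); apply: qM.
split=> [|m] /=; first by rewrite qM0 mulr0 addr0 mulf_neq0.
have [-> | /pmax pm _ //] := eqVneq (mcoef p m) 0.
by rewrite mulr0 add0r mulf_eq0 negb_or => /andP[_ /qM].
Qed.

End LeadingMonomials.

Section ReducedGroebner.

Variables (F : fieldType) (n : nat) (lt : mon n -> mon n -> bool).
Variables (S : seq (point F n)) (h : point F n).
Variables (s : nat) (g : 'I_s -> mpoly F n) (lms : 'I_s -> mon n) (i : 'I_s).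
Hypothesis ord : term_order lt.
Hypothesis gb : reduced_groebner lt S g lms.
Hypothesis lms_sorted : forall j k : 'I_s, (j < k)%N -> lt (lms j) (lms k).
Hypothesis gi_h : peval (g i) h != 0.
Hypothesis g_h : forall j : 'I_s, (j < i)%N -> peval (g j) h = 0.

Lemma lms_le_multiple (j : 'I_s) (m : mon n) :
  (i <= j)%N -> mondiv (lms j) m -> m = lms i \/ lt (lms i) m.
Proof.
move=> ij /(mondiv_le ord) jm.
have ij' : lms j = lms i \/ lt (lms i) (lms j).
  by move: ij; rewrite leq_eqVlt => /predU1P[/ord_inj -> | /lms_sorted]; [left | right].
case: jm => [-> | jm]; first by case: ij'; [left | right].
by right; case: ij' => [<- // | ij']; exact: (mon_lt_trans ord ij' jm).
Qed.

Lemma peval_supp_below_lms (f : mpoly F n) :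
  vanishes S f -> supp_below lt f (lms i) -> peval f h = 0.
Proof.
case: gb => gS glm gdiv g1 _.
suff below M : M = lms i \/ lt M (lms i) ->
    forall f, vanishes S f -> supp_below lt f M -> peval f h = 0.
  by apply: below; left.
elim/(well_founded_ind (mon_lt_wf ord)): M => M IH Mi {}f fS fM.
have [f0 | [m lmf]] := mpoly_eq0_or_lm ord f; first exact: peval_eq0.
have mM := fM m lmf.1.
have mi : lt m (lms i) by case: Mi mM => [-> // | Mi mM]; exact: (mon_lt_trans ord mM Mi).
have [j jm] := gdiv f m fS lmf.
have ji : (j < i)%N.
  rewrite ltnNge; apply/negP => /lms_le_multiple/(_ jm)[im | im].
    by rewrite im (negbTE (mon_ltxx ord _)) in mi.
  by have := mon_ltxx ord m; rewrite (mon_lt_trans ord mi im).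
set r := pmulmon (mondiff (lms j) m) (g j).
have r1 : mcoef r m = 1 by rewrite mcoef_pmulmon_diff // g1.
have -> : peval f h = peval (pcomb 1 f (- mcoef f m) r) h.
  by rewrite peval_pcomb peval_pmulmon g_h // !mulr0 addr0 mul1r.
apply: (IH m mM (or_intror mi)).
  exact: vanishes_pcomb fS (vanishes_pmulmon _ (gS j)).
apply: pcomb_cancel_lm lmf (is_lm_pmulmon_diff ord (glm j) jm) _.
by rewrite r1 mul1r mulr1 subrr.
Qed.

Lemma lm_vanishing_cons (p : mpoly F n) (m : mon n) :
  m != lms i -> vanishes S p -> is_lm lt p m -> exists2 f, vanishes (h :: S) f & is_lm lt f m.
Proof.
case: gb => gS glm gdiv _ _ mi pS lmp.
have [j jm] := gdiv p m pS lmp.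
set r := pmulmon (mondiff (lms j) m) (g j).
have rS : vanishes S r := vanishes_pmulmon _ (gS j).
have lmr : is_lm lt r m := is_lm_pmulmon_diff ord (glm j) jm.
have [ji | ij] := ltnP j i.
  by exists r => //; apply/vanishes_cons; rewrite peval_pmulmon g_h ?mulr0.
have im : lt (lms i) m.
  by case: (lms_le_multiple ij jm) => // eq_mi; rewrite eq_mi eqxx in mi.
exists (pcomb 1 r (- (peval r h / peval (g i) h)) (g i)).
  apply/vanishes_cons; split; last exact: vanishes_pcomb rS (gS i).
  by rewrite peval_pcomb mul1r mulNr divfK // subrr.
exact: (is_lm_pcomb ord _ (oner_neq0 _) lmr (is_lm_supp_below ord (glm i) im)).
Qed.

Lemma Sm_cons_lms : Sm lt (h :: S) (lms i).
Proof.
case: gb => gS glm _ g1 _ [p [/vanishes_cons[ph pS] [_ lmp]]].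
have f_below : supp_below lt (pcomb 1 p (- mcoef p (lms i)) (g i)) (lms i).
  by apply: pcomb_cancel_lm lmp (glm i) _; rewrite g1 mul1r mulr1 subrr.
move/eqP: (peval_supp_below_lms (vanishes_pcomb _ _ pS (gS i)) f_below).
rewrite peval_pcomb ph mulr0 add0r mulNr oppr_eq0 mulf_eq0 (negbTE gi_h) orbF.
by rewrite (negbTE lmp.1).
Qed.

End ReducedGroebner.

Theorem mainTheorem4 (F : fieldType) (n : nat) (lt : mon n -> mon n -> bool)
    (S : seq (point F n)) (h : point F n)
    (s : nat) (g : 'I_s -> mpoly F n) (lms : 'I_s -> mon n) (i : 'I_s) :
  term_order lt ->
  h \notin S ->
  reduced_groebner lt S g lms ->
  (forall j k : 'I_s, (j < k)%N -> lt (lms j) (lms k)) ->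
  peval (g i) h != 0 ->
  (forall j : 'I_s, (j < i)%N -> peval (g j) h = 0) ->
  forall m : mon n, Sm lt (h :: S) m <-> (Sm lt S m \/ m = lms i).
Proof.
(* h \notin S is implied by g_i(h) <> 0 since g_i vanishes on S. *)
move=> ord _ gb lms_sorted gi_h g_h m; split=> [smT | [smS | ->]].
- have [-> | mi] := eqVneq m (lms i); [by right | left].
  move=> [p [pS [_ lmp]]]; apply: smT.
  have [f fT lmf] := lm_vanishing_cons ord gb lms_sorted gi_h g_h mi pS lmp.
  by exists f; split=> //; split=> //; exists m; case: lmf.
- by apply: contra_not smS => -[p [/vanishes_cons[_ pS] lmp]]; exists p.
- exact: Sm_cons_lms ord gb lms_sorted gi_h g_h.
Qed.
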